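(* Let $J\subseteq S$. The maps $\Pi_\downarrow^J$ and $\Pi_\uparrow^J$ are order-preserving with respect to $\le_S$.
   Context: $\mathfrak{S}_n$ is the symmetric group on $[n]$, $s_i=(i,i+1)$, $S=\{s_1,\dots,s_{n-1}\}$, one-line notation $w=w_1\cdots w_n$, $\mathrm{inv}(w)=\{(i,j):i<j,\ w_i>w_j\}$, weak order $u\le_S v\iff\mathrm{inv}(u)\subseteq\mathrm{inv}(v)$. For $J\subseteq S$, $\mathfrak{S}_n^J$ is the set of $w$ with $w_i<w_{i+1}$ whenever $s_i\in J$. Writing $J=S\setminus\{s_{j_1},\dots,s_{j_r}\}$ with $j_1<\dots<j_r$, the $J$-regions are $\{1,\dots,j_1\},\{j_1+1,\dots,j_2\},\dots,\{j_r+1,\dots,n\}$. $w\in\mathfrak{S}_n^J$ is $(J,231)$-avoiding if there are no indices $i<j<k$ in pairwise different $J$-regions with $w_k<w_i<w_j$ and $w_i=w_k+1$, and $(J,132)$-avoiding if there are no indices $i<j<k$ in pairwise different $J$-regions with $w_i<w_k<w_j$ and $w_k=w_i+1$. For $w\in\mathfrak{S}_n^J$, $\Pi_\downarrow^J(w)$ is the unique greatest $(J,231)$-avoiding element of $\mathfrak{S}_n^J$ that is $\le_S w$, and $\Pi_\uparrow^J(w)$ is the unique least $(J,132)$-avoiding element of $\mathfrak{S}_n^J$ that is $\ge_S w$ (both exist). *)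

(* Positions and values are 0-based: w : 'S_n, w_i = w i.
   The simple transposition s_{j+1} (1-based) is indexed by j : 'I_n.-1 and
   swaps positions j and j+1 (0-based). *)
From mathcomp Require Import all_boot fingroup perm.
Set Implicit Arguments. Unset Strict Implicit. Unset Printing Implicit Defensive.

Section Defs.
Variable n : nat.
Implicit Types (J : {set 'I_n.-1}) (u v w : 'S_n).

Definition inJ J (p : nat) : bool :=
  [exists j : 'I_n.-1, (j \in J) && (nat_of_ord j == p)].

Definition in_quot J w : bool :=
  [forall i : 'I_n, forall j : 'I_n,
     ((nat_of_ord j == i.+1) && inJ J i) ==> (w i < w j)].

(* index of the J-region containing position p: number of s_{j+1} not in J
   that separate positions before p *)
Definition region J (p : 'I_n) : nat :=
  #|[set j : 'I_n.-1 | (j \notin J) && (nat_of_ord j < p)]|.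

Definition inv w : {set 'I_n * 'I_n} :=
  [set ij : 'I_n * 'I_n | (ij.1 < ij.2) && (w ij.2 < w ij.1)].

Definition weak_le u v : bool := inv u \subset inv v.

Definition pw_diff_regions J (i j k : 'I_n) : bool :=
  [&& region J i != region J j, region J j != region J k
    & region J i != region J k].

Definition avoid231 J w : bool :=
  [forall i : 'I_n, forall j : 'I_n, forall k : 'I_n,
     ~~ [&& i < j, j < k, pw_diff_regions J i j k,
            w k < w i, w i < w j & nat_of_ord (w i) == (w k).+1]].

Definition avoid132 J w : bool :=
  [forall i : 'I_n, forall j : 'I_n, forall k : 'I_n,
     ~~ [&& i < j, j < k, pw_diff_regions J i j k,
            w i < w k, w k < w j & nat_of_ord (w k) == (w i).+1]].

(* Pi_down^J(w): the greatest (J,231)-avoiding element of S_n^J below w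
   (default w if it did not exist; it always exists). *)
Definition Pi_down J w : 'S_n :=
  odflt w [pick x : 'S_n | [&& in_quot J x, avoid231 J x, weak_le x w &
     [forall y : 'S_n,
        [&& in_quot J y, avoid231 J y & weak_le y w] ==> weak_le y x]]].

Definition Pi_up J w : 'S_n :=
  odflt w [pick x : 'S_n | [&& in_quot J x, avoid132 J x, weak_le w x &
     [forall y : 'S_n,
        [&& in_quot J y, avoid132 J y & weak_le w y] ==> weak_le x y]]].

End Defs.

(* Monotonicity is immediate once the extremal elements exist: Pi_down u <= u <= v,
   so Pi_down u is a (J,231)-avoiding element of the quotient below v, hence below
   Pi_down v; dually for Pi_up.
   Existence is proved by descent. If w has a (J,231)-pattern (i,j,k), swapping the
   consecutive values w_i and w_k removes exactly the inversion (i,k) and stays in the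
   quotient, while no (J,231)-avoiding x <= w keeps that inversion: otherwise, going up
   through the values from x_k to x_i one meets consecutive values e, e+1 placed after
   and before j, the weak order forces them outside the positions strictly between
   i and k, and they form with j a (J,231)-pattern of x. The (J,132) case is the same
   argument for the reversed order. *)

From Pilot Require Import Defs.
From mathcomp Require Import all_boot fingroup perm zify.

Set Implicit Arguments. Unset Strict Implicit. Unset Printing Implicit Defensive.

Lemma nat_rising_edge (f : nat -> bool) (a b : nat) :
  a <= b -> ~~ f a -> f b -> exists2 e, a <= e < b & ~~ f e && f e.+1.
Proof.
elim: b => [|b IH]; first by rewrite leqn0 => /eqP-> /negPf->.
rewrite leq_eqVlt => /predU1P[-> /negPf-> //|ab] fa fb.
have [fb'|nfb'] := boolP (f b).
  by have [e /andP[ae eb] fe] := IH ab fa fb'; exists e; rewrite // ae ltnW.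
by exists b; rewrite ?ltnSn ?andbT //= nfb'.
Qed.

Lemma forall3_negPn (T : finType) (P : T -> T -> T -> bool) :
  reflect (exists i j k, P i j k) (~~ [forall i, forall j, forall k, ~~ P i j k]).
Proof.
apply: (iffP forallPn) => [[i /forallPn[j /forallPn[k /negPn]]]|[i [j [k ijk]]]].
  by exists i, j, k.
by exists i; apply/forallPn; exists j; apply/forallPn; exists k; rewrite negbK.
Qed.

Section Permutations.
Variable n : nat.
Implicit Types (w x : 'S_n).

Lemma perm_val_onto x (e : nat) : e < n -> exists p, x p = e :> nat.
Proof. by move=> en; exists ((x^-1)%g (Ordinal en)); rewrite permKV. Qed.

Lemma val_perm_eq x (p q : 'I_n) : (x p == x q :> nat) = (p == q :> nat).
Proof. by rewrite !val_eqE (inj_eq perm_inj). Qed.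

Lemma tperm_consecutive_lt (a b u v : 'I_n) :
  b = a.+1 :> nat -> (u, v) != (a, b) -> (u, v) != (b, a) ->
  (tperm a b u < tperm a b v) = (u < v).
Proof.
move=> ba; rewrite !xpair_eqE -!val_eqE /=.
have ord_neq (y z : 'I_n) : y <> z -> y <> z :> nat by move=> + /val_inj.
case: (tpermP a b u) => [->|->|/ord_neq ua /ord_neq ub];
  case: (tpermP a b v) => [->|->|/ord_neq va /ord_neq vb]; move=> *; apply/idP/idP; lia.
Qed.

Lemma tperm_consecutive_ltE w (i k p q : 'I_n) :
  w k = (w i).+1 :> nat -> (p, q) != (i, k) -> (p, q) != (k, i) ->
  ((tperm i k * w)%g p < (tperm i k * w)%g q) = (w p < w q).
Proof.
move=> wik pik pki.
by rewrite conjgC tpermJ !permM tperm_consecutive_lt // !xpair_eqE !(inj_eq perm_inj).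
Qed.

Lemma consecutive_values_across x (j l h : 'I_n) :
  x l <= x h -> (l < j) != (h < j) ->
  exists a b : 'I_n, [/\ x l <= x a, x b <= x h, x b = (x a).+1 :> nat,
                         (a < j) = (l < j) & (b < j) = (h < j)].
Proof.
move=> lh lhj.
pose f e := [exists p, (x p == e :> nat) && ((p < j) != (l < j))].
have fx p : f (x p) = ((p < j) != (l < j)).
  apply/existsP/idP => [[q /andP[/eqP/val_inj/perm_inj-> //]]|pj].
  by exists p; rewrite eqxx.
have fl : ~~ f (x l) by rewrite fx eqxx.
have fh : f (x h) by rewrite fx eq_sym.
have [e /andP[le eh] /andP[fe fe1]] := nat_rising_edge lh fl fh.
have [a xa] := perm_val_onto x (ltn_trans eh (ltn_ord _)).
have [b xb] := perm_val_onto x (leq_ltn_trans eh (ltn_ord _)).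
exists a, b; rewrite xa xb; split => //.
  by move: fe; rewrite -xa fx negbK => /eqP.
by move: fe1 lhj; rewrite -xb fx; case: (b < j) (l < j) (h < j) => [] [] [].
Qed.

Lemma weak_le_inv x w (p q : 'I_n) : weak_le x w -> p < q -> x q < x p -> w q < w p.
Proof. by move=> /subsetP/(_ (p, q)) + pq qp; rewrite !inE /= pq qp; apply. Qed.

Lemma weak_le_noninv x w (p q : 'I_n) : weak_le x w -> p < q -> w p < w q -> x p < x q.
Proof.
move=> xw pq wpq; case: ltngtP => // [xqp|/val_inj/perm_inj qp].
  by have := weak_le_inv xw pq xqp; rewrite ltnNge ltnW.
by move: pq; rewrite qp ltnn.
Qed.

Lemma weak_le_refl : reflexive (@weak_le n).
Proof. by move=> w; apply: subxx. Qed.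

Lemma weak_le_trans : transitive (@weak_le n).
Proof. by move=> v u w; apply: subset_trans. Qed.

Lemma inv_tperm_ascent w (i k : 'I_n) :
  i < k -> w k = (w i).+1 :> nat -> Defs.inv (tperm i k * w)%g = (i, k) |: Defs.inv w.
Proof.
move=> ik wik; apply/setP => -[p q]; rewrite !inE /= xpair_eqE.
have [/andP[/eqP-> /eqP->]|pq_ik] := boolP ((p == i) && (q == k)).
  by rewrite !permM tpermL tpermR ik wik ltnSn.
have [/andP[/eqP-> /eqP->]|pq_ki] := boolP ((p == k) && (q == i)).
  by rewrite ltnNge (ltnW ik).
by rewrite tperm_consecutive_ltE // xpair_eqE andbC.
Qed.

Lemma inv_tperm_descent w (i k : 'I_n) :
  i < k -> w i = (w k).+1 :> nat -> Defs.inv (tperm i k * w)%g = Defs.inv w :\ (i, k).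
Proof.
move=> ik wik; apply/setP => -[p q]; rewrite !inE /= xpair_eqE.
have [/andP[/eqP-> /eqP->]|pq_ik] := boolP ((p == i) && (q == k)).
  by rewrite !permM tpermL tpermR wik (ltnNge (w k).+1) leqnSn andbF.
have [/andP[/eqP-> /eqP->]|pq_ki] := boolP ((p == k) && (q == i)).
  by rewrite ltnNge (ltnW ik).
by rewrite tpermC tperm_consecutive_ltE // xpair_eqE andbC.
Qed.

End Permutations.

Section Regions.
Variable n : nat.
Implicit Types (J : {set 'I_n.-1}) (w : 'S_n).

Lemma region_mono J : {homo region J : p q / p <= q}.
Proof.
move=> p q pq; apply/subset_leq_card/subsetP => j; rewrite !inE.
by case/andP=> -> /leq_trans->.
Qed.

Lemma region_succ J (p q : 'I_n) : inJ J p -> q = p.+1 :> nat -> region J q = region J p.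
Proof.
case/existsP=> j0 /andP[j0J /eqP j0p] qp; apply: eq_card => j; rewrite !inE qp ltnS.
rewrite leq_eqVlt; case: (eqVneq (nat_of_ord j) p) => [jp|] //=.
have -> : j = j0 by apply: val_inj; rewrite /= jp j0p.
by rewrite j0J.
Qed.

Lemma pw_diff_regions_widen J (p i j k q : 'I_n) :
  p <= i -> i < j -> j < k -> k <= q ->
  pw_diff_regions J i j k -> pw_diff_regions J p j q.
Proof.
move=> pi ij jk kq /and3P[rij rjk _].
have := region_mono J pi; have := region_mono J (ltnW ij).
have := region_mono J (ltnW jk); have := region_mono J kq.
by rewrite /pw_diff_regions; lia.
Qed.

Lemma in_quot_tperm J w (i k : 'I_n) :
  region J i != region J k -> w k = (w i).+1 :> nat ->
  in_quot J w -> in_quot J (tperm i k * w)%g.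
Proof.
move=> rik wik /forallP qw; apply/forallP => p; apply/forallP => q.
apply/implyP => /andP[/eqP qp pJ]; have rqp := region_succ pJ qp.
rewrite tperm_consecutive_ltE //; first by apply: (implyP (forallP (qw p) q)); rewrite qp eqxx.
all: by apply: contra rik; rewrite xpair_eqE => /andP[/eqP<- /eqP<-]; rewrite rqp.
Qed.

End Regions.

Section Patterns.
Variable n : nat.
Implicit Types (J : {set 'I_n.-1}) (w x : 'S_n).

Definition pattern231 J w (i j k : 'I_n) : bool :=
  [&& i < j, j < k, pw_diff_regions J i j k,
      w k < w i, w i < w j & nat_of_ord (w i) == (w k).+1].

Definition pattern132 J w (i j k : 'I_n) : bool :=
  [&& i < j, j < k, pw_diff_regions J i j k,
      w i < w k, w k < w j & nat_of_ord (w k) == (w i).+1].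

Lemma pattern231P J w : reflect (exists i j k, pattern231 J w i j k) (~~ avoid231 J w).
Proof. exact: forall3_negPn. Qed.

Lemma pattern132P J w : reflect (exists i j k, pattern132 J w i j k) (~~ avoid132 J w).
Proof. exact: forall3_negPn. Qed.

Lemma avoid231_below_pattern J w x (i j k : 'I_n) :
  pattern231 J w i j k -> avoid231 J x -> weak_le x w -> (i, k) \notin Defs.inv x.
Proof.
move=> /and3P[ij jk /and4P[ijk _ wij /eqP wik]] ax xw.
rewrite inE /= (ltn_trans ij jk) /=; apply/negP => xki.
have xij : x i < x j := weak_le_noninv xw ij wij.
(* inversions (i,m) and (m,k) of x would be inversions of w, impossible as w_i = w_k + 1 *)
have gap (m : 'I_n) : i < m -> m < k -> x k <= x m <= x i -> False.
  move=> im mk; have := val_perm_eq x m k; have := val_perm_eq x m i.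
  have := weak_le_inv xw im; have := weak_le_inv xw mk; lia.
have kij : (k < j) != (i < j) by rewrite ij (ltnNge k j) (ltnW jk).
have [a [b [xka xbi xab]]] := consecutive_values_across (ltnW xki) kij.
rewrite ij (ltnNge k j) (ltnW jk) /= => /negbT; rewrite -leqNgt => ja bj.
have ka : k <= a by rewrite leqNgt; apply/negP => ak; apply: (gap a); lia.
have bi : b <= i by rewrite leqNgt; apply/negP => ib; apply: (gap b); lia.
suff: ~~ avoid231 J x by rewrite ax.
apply/pattern231P; exists b, j, a.
by rewrite /pattern231 (pw_diff_regions_widen bi ij jk ka ijk) /=; lia.
Qed.

Lemma avoid132_above_pattern J w x (i j k : 'I_n) :
  pattern132 J w i j k -> avoid132 J x -> weak_le w x -> (i, k) \in Defs.inv x.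
Proof.
move=> /and3P[ij jk /and4P[ijk _ wkj /eqP wki]] ax wx.
rewrite inE /= (ltn_trans ij jk) /= ltnNge; apply/negP => xik.
have xkj : x k < x j := weak_le_inv wx jk wkj.
(* w_m < w_i or w_k < w_m would give an inversion (i,m) or (m,k) of w, hence of x *)
have gap (m : 'I_n) : i < m -> m < k -> x i <= x m <= x k -> False.
  move=> im mk; have := val_perm_eq w m k; have := val_perm_eq w m i.
  have := val_perm_eq x m k; have := val_perm_eq x m i.
  have := weak_le_inv wx im; have := weak_le_inv wx mk; lia.
have ikj : (i < j) != (k < j) by rewrite ij (ltnNge k j) (ltnW jk).
have [a [b [xia xbk xab]]] := consecutive_values_across xik ikj.
rewrite ij (ltnNge k j) (ltnW jk) /= => aj /negbT; rewrite -leqNgt => jb.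
have ai : a <= i by rewrite leqNgt; apply/negP => ia; apply: (gap a); lia.
have kb : k <= b by rewrite leqNgt; apply/negP => bk; apply: (gap b); lia.
suff: ~~ avoid132 J x by rewrite ax.
apply/pattern132P; exists a, j, b.
by rewrite /pattern132 (pw_diff_regions_widen ai ij jk kb ijk) /=; lia.
Qed.

End Patterns.

Section GreatestBelow.
Variables (T : finType) (le : rel T) (Q A : pred T) (m : T -> nat).
Hypotheses (le_refl : reflexive le) (le_trans : transitive le).
Hypothesis descent : forall w, Q w -> ~~ A w ->
  exists2 w', Q w' & [/\ le w' w, m w' < m w & forall y, Q y -> A y -> le y w -> le y w'].

Definition greatest_below (w x : T) : bool :=
  [&& Q x, A x, le x w & [forall y, [&& Q y, A y & le y w] ==> le y x]].

Lemma exists_greatest_below w : Q w -> exists x, greatest_below w x.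
Proof.
have [N] := ubnP (m w); elim: N w => // N IH w mwN Qw.
have [Aw|nAw] := boolP (A w).
  exists w; rewrite /greatest_below Qw Aw le_refl.
  by apply/forallP => y; apply/implyP => /and3P[].
have [w' Qw' [w'w mw' maxw']] := descent Qw nAw.
have [x /and4P[Qx Ax xw' /forallP maxx]] := IH w' (leq_trans mw' mwN) Qw'.
exists x; rewrite /greatest_below Qx Ax (le_trans xw' w'w).
apply/forallP => y; apply/implyP => /and3P[Qy Ay yw].
by apply: (implyP (maxx y)); rewrite Qy Ay maxw'.
Qed.

Lemma pick_greatest_belowP w : Q w ->
  let x := odflt w [pick x | greatest_below w x] in
  [/\ Q x, A x, le x w & forall y, Q y -> A y -> le y w -> le y x].
Proof.
move=> Qw; case: pickP => [x /and4P[Qx Ax xw /forallP maxx]|none] /=.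
  by split=> // y Qy Ay yw; apply: (implyP (maxx y)); rewrite Qy Ay.
by have [x] := exists_greatest_below Qw; rewrite none.
Qed.

End GreatestBelow.

Section Projections.
Variables (n : nat) (J : {set 'I_n.-1}).
Implicit Types (w y : 'S_n).

Lemma descent231 w : in_quot J w -> ~~ avoid231 J w ->
  exists2 w', in_quot J w' & [/\ weak_le w' w, #|Defs.inv w'| < #|Defs.inv w| &
    forall y, in_quot J y -> avoid231 J y -> weak_le y w -> weak_le y w'].
Proof.
move=> qw /pattern231P[i [j [k pat]]].
have /and3P[ij jk /and4P[ijk wki _ /eqP wik]] := pat.
have ik := ltn_trans ij jk.
have rik : region J k != region J i by case/and3P: ijk => _ _; rewrite eq_sym.
have ik_inv : (i, k) \in Defs.inv w by rewrite inE /= ik wki.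
exists (tperm i k * w)%g; first by rewrite tpermC in_quot_tperm.
rewrite /weak_le inv_tperm_descent // subsetDl (proper_card (properD1 ik_inv)).
by split=> // y _ ay yw; rewrite subsetD1 yw (avoid231_below_pattern pat).
Qed.

Lemma ascent132 w : in_quot J w -> ~~ avoid132 J w ->
  exists2 w', in_quot J w' & [/\ weak_le w w', #|~: Defs.inv w'| < #|~: Defs.inv w| &
    forall y, in_quot J y -> avoid132 J y -> weak_le w y -> weak_le w' y].
Proof.
move=> qw /pattern132P[i [j [k pat]]].
have /and3P[ij jk /and4P[ijk wik _ /eqP wki]] := pat.
have ik := ltn_trans ij jk.
have rik : region J i != region J k by case/and3P: ijk.
have ik_inv : (i, k) \in ~: Defs.inv w by rewrite !inE /= ik -leqNgt ltnW.
exists (tperm i k * w)%g; first exact: in_quot_tperm.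
rewrite /weak_le inv_tperm_ascent // subsetUr setCU setIC -setDE.
rewrite (proper_card (properD1 ik_inv)); split=> // y _ ay wy.
by rewrite subUset sub1set wy (avoid132_above_pattern pat).
Qed.

Lemma Pi_downP w : in_quot J w ->
  [/\ in_quot J (Pi_down J w), avoid231 J (Pi_down J w), weak_le (Pi_down J w) w &
      forall y, in_quot J y -> avoid231 J y -> weak_le y w -> weak_le y (Pi_down J w)].
Proof.
exact: (pick_greatest_belowP (@weak_le_refl n) (@weak_le_trans n) descent231).
Qed.

Lemma Pi_upP w : in_quot J w ->
  [/\ in_quot J (Pi_up J w), avoid132 J (Pi_up J w), weak_le w (Pi_up J w) &
      forall y, in_quot J y -> avoid132 J y -> weak_le w y -> weak_le (Pi_up J w) y].
Proof.
have weak_ge_refl : reflexive (fun u v => @weak_le n v u) := @weak_le_refl n.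
have weak_ge_trans : transitive (fun u v => @weak_le n v u).
  by move=> u1 u2 u3 u21 u32; apply: weak_le_trans u32 u21.
exact: (pick_greatest_belowP weak_ge_refl weak_ge_trans ascent132).
Qed.

End Projections.

Theorem lemma3p15 (n : nat) (J : {set 'I_n.-1}) (u v : 'S_n) :
  in_quot J u -> in_quot J v -> weak_le u v ->
  weak_le (Pi_down J u) (Pi_down J v) /\ weak_le (Pi_up J u) (Pi_up J v).
Proof.
move=> qu qv uv.
have [qdu adu du_u _] := Pi_downP qu; have [_ _ _ max_dv] := Pi_downP qv.
have [_ _ u_uu min_uu] := Pi_upP qu; have [quv auv v_uv _] := Pi_upP qv.
split; first by apply: max_dv => //; apply: weak_le_trans du_u uv.
by apply: min_uu => //; apply: weak_le_trans uv v_uv.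
Qed.
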